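(* Fix $q\in[0,1]$, an odd positive integer $\tau$, and parameters $x(z,T)\in[0,1)$ for $z\in\mathbb Z$, $T\in\{1,\dots,\tau\}$ with $z\equiv T \pmod 2$. For $T\in\{1,\dots,\tau\}$ let $\mathcal L_T$ denote the random operation on configurations $\mathcal L_T=\prod_{z\equiv T \ (\mathrm{mod}\ 2)} W_{(z,z+1),x(z,T)}$ (the factors act on disjoint pairs of sites and commute; they are applied independently). Let $s_1,\dots,s_k$ be a finite sequence of transpositions of neighboring integers. Process 1: start from $\eta(z)=z$, $z\in\mathbb Z$; apply $W_{s_1,1},\dots,W_{s_k,1}$ in this order; then apply $\mathcal L_1,\mathcal L_2,\dots,\mathcal L_\tau$ in this order. Let $\eta_1$ be the resulting random configuration. Process 2: start from $\eta(z)=z$, $z\in\mathbb Z$; apply $\mathcal L_\tau,\mathcal L_{\tau-1},\dots,\mathcal L_1$ in this order (i.e., run the same discrete-time dynamics with time-reversed inhomogeneity parameters); then apply $W_{s_k,1},W_{s_{k-1},1},\dots,W_{s_1,1}$ in this order. Let $\eta_2$ be the resulting random configuration. Then $\eta_1$ and $\eta_2$ are (almost surely) bijections $\mathbb Z\to\mathbb Z$, and $\eta_1$ has the same distribution as the inverse bijection $\eta_2^{-1}$.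
   Context: A configuration is a map $\eta:\mathbb Z\to\mathbb Z\cup\{+\infty\}$; $\eta(z)$ is the color of the particle at site $z$. For $z\in\mathbb Z$ let $\sigma_{(z,z+1)}$ exchange the values $\eta(z)$ and $\eta(z+1)$. For $x\in[0,1]$ the random asymmetric swap $W_{(z,z+1),x}$ maps $\eta$ to: $\sigma_{(z,z+1)}\eta$ with probability $x$ and $\eta$ with probability $1-x$ if $\eta(z)<\eta(z+1)$; $\sigma_{(z,z+1)}\eta$ with probability $qx$ and $\eta$ with probability $1-qx$ if $\eta(z)>\eta(z+1)$; $\eta$ with probability 1 if $\eta(z)=\eta(z+1)$. This discrete-time dynamics (step $T$ applies $\mathcal L_T$) is the colored stochastic six vertex model with inhomogeneities $x(z,T)$. *)

From HB Require Import structures.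
From mathcomp Require Import all_boot all_order all_algebra.
From mathcomp Require Import all_classical all_reals all_analysis.
Set Implicit Arguments. Unset Strict Implicit. Unset Printing Implicit Defensive.
Import Order.TTheory GRing.Theory Num.Theory.
Local Open Scope classical_set_scope.
Local Open Scope ring_scope.

(* A configuration: the color of the particle at each site.  Starting from the
   identity configuration all colors are finite integers, and swaps only
   permute colors, so configurations reachable here are maps int -> int. *)
Definition config := int -> int.

Definition id_config : config := fun z => z.

Definition swapAt (z : int) (eta : config) : config :=
  fun y => if y == z then eta (z + 1) else if y == z + 1 then eta z else eta y.

(* Randomness is realised by coins: [a] is a coin of probability x (the
   inhomogeneity parameter) and [b] an independent coin of probability q.
   Given colors u = eta(z), v = eta(z+1), the swap happens
   - if u < v : iff a            (probability x)
   - if u > v : iff a && b       (probability q x)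
   - if u = v : never.                                                     *)
Definition swapb (a b : bool) (u v : int) : bool :=
  if u < v then a else if v < u then a && b else false.

Definition Wstep (z : int) (a b : bool) (eta : config) : config :=
  if swapb a b (eta z) (eta (z + 1)) then swapAt z eta else eta.

(* Coin indices: (step number, site, kind), kind false = "x-coin",
   kind true = "q-coin". *)
Definition coin_index := (nat * int * bool)%type.

(* The layer L_T : independent swaps on all pairs (z,z+1), z = T mod 2,
   applied simultaneously (they act on disjoint pairs); the coins used for the
   pair with left endpoint z are c (z,false), c (z,true). *)
Definition layer (T : nat) (c : int -> bool -> bool) (eta : config) : config :=
  fun y =>
    let z := if (2 %| y - T%:Z)%Z then y else y - 1 in
    if swapb (c z false) (c z true) (eta z) (eta (z + 1))
    then (if y == z then eta (y + 1) else eta (y - 1))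
    else eta y.

Section Processes.
Variables (d : measure_display) (Omega : measurableType d).
Variable E : coin_index -> set Omega.

Definition coin (w : Omega) (j : nat) (z : int) (k : bool) : bool :=
  w \in E (j, z, k).

(* Process 1 (s = list of left endpoints of the transpositions s_1..s_k):
   steps 0..k-1 : W_{s_1,1}, ..., W_{s_k,1};
   steps k..k+tau-1 : L_1, ..., L_tau. *)
Definition process1 (tau : nat) (s : seq int) (w : Omega) : config :=
  let eta_s := foldl (fun eta j => Wstep (nth 0 s j) (coin w j (nth 0 s j) false)
                                        (coin w j (nth 0 s j) true) eta)
                     id_config (iota 0 (size s)) in
  foldl (fun eta T => layer T (coin w (size s + T.-1)%N) eta) eta_s (iota 1 tau).

(* Process 2: steps 0..tau-1 : L_tau, ..., L_1;
   steps tau..tau+k-1 : W_{s_k,1}, ..., W_{s_1,1}. *)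
Definition process2 (tau : nat) (s : seq int) (w : Omega) : config :=
  let eta_L := foldl (fun eta j => layer (tau - j)%N (coin w j) eta)
                     id_config (iota 0 tau) in
  foldl (fun eta i =>
           let z := nth 0 s (size s - i.+1)%N in
           Wstep z (coin w (tau + i)%N z false) (coin w (tau + i)%N z true) eta)
        eta_L (iota 0 (size s)).
End Processes.

(* Probability of the x-coin with index (j,z) in process 1 / process 2.
   Coins not used by the process are given probability 0 (irrelevant). *)
Definition xprob1 {R : realType} (tau : nat) (s : seq int) (x : int -> nat -> R)
  (j : nat) (z : int) : R :=
  if (j < size s)%N then (if z == nth 0 s j then 1 else 0)
  else if (j < size s + tau)%N then
         (if (2 %| z - (j - size s).+1%N%:Z)%Z then x z (j - size s).+1%N else 0)
  else 0.

Definition xprob2 {R : realType} (tau : nat) (s : seq int) (x : int -> nat -> R)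
  (j : nat) (z : int) : R :=
  if (j < tau)%N then
    (if (2 %| z - (tau - j)%N%:Z)%Z then x z (tau - j)%N else 0)
  else if (j < tau + size s)%N then
         (if z == nth 0 s (size s - (j - tau).+1)%N then 1 else 0)
  else 0.

Definition mutually_independent {R : realType} d (Omega : measurableType d)
  (P : probability Omega R) (I : eqType) (E : I -> set Omega) : Prop :=
  forall s : seq I, uniq s ->
    P (\big[setI/setT]_(i <- s) E i) = \big[*%E/1%E]_(i <- s) P (E i).

Definition coin_family {R : realType} d (Omega : measurableType d)
  (P : probability Omega R) (E : coin_index -> set Omega)
  (p : nat -> int -> R) (q : R) : Prop :=
  [/\ forall i, measurable (E i),
      mutually_independent P E,
      forall j z, P (E (j, z, false)) = (p j z)%:E
    & forall j z, P (E (j, z, true)) = q%:E].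

(* Product sigma-algebra on configurations: generated by evaluation maps. *)
Definition cylinders : set (set config) :=
  [set A | exists z a, A = [set eta : config | eta z = a]].

Definition config_measurable (A : set config) : Prop := <<s cylinders >> A.

(* Inverse of a bijection int -> int (arbitrary value 0 if no preimage). *)
Definition inv_config (eta : config) : config :=
  fun a => xget 0 [set z | eta z = a].

From HB Require Import structures.
From mathcomp Require Import all_boot all_order all_algebra.
From mathcomp Require Import all_classical all_reals all_analysis.
From mathcomp Require Import zify ring.
Import Order.TTheory GRing.Theory Num.Theory.
Local Open Scope classical_set_scope.
Local Open Scope ring_scope.
Set Implicit Arguments. Unset Strict Implicit. Unset Printing Implicit Defensive.

(* Track a configuration together with its inverse.  A random swap of the
   sites z, z+1 multiplies the configuration on the right by a random
   transposition; the same random swap of the colors c, c+1 multiplies it on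
   the left, and on the inverse it is a site swap.  The two kinds of random
   swaps commute in law (when sites z, z+1 carry exactly the colors c, c+1 this
   is a direct computation with the rates x and q x), and at the identity a
   site swap and the color swap of the same pair coincide.  Hence for a finite
   sequence of swaps, running it forwards from the identity has the law of the
   inverse of running it backwards.  The layers act on infinitely many pairs,
   but every step only reads nearest neighbours, so on a finite window both
   processes agree with finite runs; the probability of an event of finitely
   many coins is computed by conditioning coin by coin, and a pi-lambda argument
   extends the equality from cylinders to all measurable sets. *)

Definition transp (z y : int) : int :=
  if y == z then z + 1 else if y == z + 1 then z else y.

Lemma transpK z : involutive (transp z).
Proof. by move=> y; rewrite /transp; repeat case: eqP => //=; lia. Qed.

Lemma transp_l z : transp z z = z + 1.
Proof. by rewrite /transp eqxx. Qed.

Lemma transp_r z : transp z (z + 1) = z.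
Proof. by rewrite /transp eqxx; case: eqP => //; lia. Qed.

Lemma swapAtE z (eta : config) y : swapAt z eta y = eta (transp z y).
Proof. by rewrite /swapAt /transp; case: (y == z); case: (y == z + 1). Qed.

Lemma ltr_transp c u v :
  ~ ((u = c /\ v = c + 1) \/ (u = c + 1 /\ v = c)) ->
  (transp c u < transp c v) = (u < v).
Proof. by move=> h; rewrite /transp; repeat case: eqP => //=; lia. Qed.

Definition maps_pair (e : config) (z c : int) :=
  (e z = c /\ e (z + 1) = c + 1) \/ (e z = c + 1 /\ e (z + 1) = c).

Lemma transp_conj (h : config) z c : injective h -> maps_pair h z c ->
  forall y, h (transp z y) = transp c (h y).
Proof.
move=> hinj hz y; rewrite /transp.
have [->|yz] := eqVneq y z.
  by case: hz => -[-> ->]; repeat case: eqP => //=; lia.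
have [->|yz1] := eqVneq y (z + 1).
  by case: hz => -[-> ->]; repeat case: eqP => //=; lia.
have hyz : h y != h z := contra_neq (@hinj y z) yz.
have hyz1 : h y != h (z + 1) := contra_neq (@hinj y (z + 1)) yz1.
by case: hz => -[e1 e2]; [rewrite -e2 -e1 | rewrite -e1 -e2];
  rewrite ?(negbTE hyz) ?(negbTE hyz1).
Qed.

(* A configuration together with its inverse: the first component maps sites
   to colors, the second colors to sites. *)
Definition cpair := (config * config)%type.

Definition dual (st : cpair) : cpair := (st.2, st.1).

Definition inverse_pair (st : cpair) := cancel st.1 st.2 /\ cancel st.2 st.1.

Definition id_pair : cpair := (id_config, id_config).

Definition site_swap (z : int) (st : cpair) : cpair :=
  (swapAt z st.1, fun c => transp z (st.2 c)).

Definition color_swap (c : int) (st : cpair) : cpair :=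
  (fun y => transp c (st.1 y), swapAt c st.2).

Definition rand_site_swap (z : int) (a b : bool) (st : cpair) : cpair :=
  if swapb a b (st.1 z) (st.1 (z + 1)) then site_swap z st else st.

Lemma inverse_pair_site_swap z st :
  inverse_pair st -> inverse_pair (site_swap z st).
Proof. by case=> h1 h2; split=> y /=; rewrite !swapAtE ?transpK ?h1 ?h2 ?transpK. Qed.

Lemma site_swapK z : involutive (site_swap z).
Proof.
by case=> e e'; congr pair; apply: funext => y; rewrite /= ?swapAtE transpK.
Qed.

Lemma color_swapK c : involutive (color_swap c).
Proof.
by case=> e e'; congr pair; apply: funext => y; rewrite /= ?swapAtE transpK.
Qed.

Lemma site_color_swapC z c st :
  color_swap c (site_swap z st) = site_swap z (color_swap c st).
Proof. by congr pair; apply: funext => y; rewrite /= !swapAtE. Qed.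

Lemma maps_pair_inv e e' z c : cancel e e' -> maps_pair e z c -> maps_pair e' c z.
Proof.
move=> ee' [] [e1 e2]; [left; rewrite -e2 -e1 | right; rewrite -e1 -e2].
all: by rewrite !ee'.
Qed.

Lemma site_swap_color z c st : inverse_pair st -> maps_pair st.1 z c ->
  site_swap z st = color_swap c st.
Proof.
case: st => e e' [/= h1 h2] hz; congr pair; apply: funext => y.
  by rewrite /= swapAtE (transp_conj (can_inj h1) hz).
by rewrite /= swapAtE (transp_conj (can_inj h2) (maps_pair_inv h1 hz)).
Qed.

Lemma site_swap_id_pair z : site_swap z id_pair = color_swap z id_pair.
Proof. by congr pair; apply: funext => y; rewrite swapAtE. Qed.

(** * Markov operators of random swaps *)

Section ExpectationOperators.
Variables (R : realType) (q : R).

Definition swap_rate (p : R) (u v : int) : R :=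
  if u < v then p else if v < u then p * q else 0.

Lemma swap_rate_lt p u v : u < v -> swap_rate p u v = p.
Proof. by rewrite /swap_rate => ->. Qed.

Lemma swap_rate_gt p u v : v < u -> swap_rate p u v = p * q.
Proof. by move=> vu; rewrite /swap_rate vu ltNge ltW. Qed.

Lemma swap_rate_transp p c u v :
  ~ ((u = c /\ v = c + 1) \/ (u = c + 1 /\ v = c)) ->
  swap_rate p (transp c u) (transp c v) = swap_rate p u v.
Proof.
by move=> h; rewrite /swap_rate !ltr_transp //; lia.
Qed.

Definition Esite (z : int) (p : R) (f : cpair -> R) (st : cpair) : R :=
  swap_rate p (st.1 z) (st.1 (z + 1)) * f (site_swap z st)
  + (1 - swap_rate p (st.1 z) (st.1 (z + 1))) * f st.

Definition Ecolor (c : int) (p : R) (f : cpair -> R) (st : cpair) : R :=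
  swap_rate p (st.2 c) (st.2 (c + 1)) * f (color_swap c st)
  + (1 - swap_rate p (st.2 c) (st.2 (c + 1))) * f st.

Lemma Ecolor_dual c p f st : Ecolor c p f (dual st) = Esite c p (f \o dual) st.
Proof. by []. Qed.

Lemma Esite_coins z p f st : Esite z p f st =
  p * (q * f (rand_site_swap z true true st)
       + (1 - q) * f (rand_site_swap z true false st))
  + (1 - p) * (q * f (rand_site_swap z false true st)
               + (1 - q) * f (rand_site_swap z false false st)).
Proof.
rewrite /Esite /rand_site_swap /swapb /swap_rate.
by case: (st.1 z < st.1 (z + 1)); case: (st.1 (z + 1) < st.1 z) => /=; ring.
Qed.

Lemma Esite_Ecolor_coincide z p c r f st : inverse_pair st -> maps_pair st.1 z c ->
  Esite z p (Ecolor c r f) st = Ecolor c r (Esite z p f) st.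
Proof.
move=> hst hz; have [h1 _] := hst.
set st' := site_swap z st.
have e : st' = color_swap c st := site_swap_color hst hz.
have ss' : site_swap z st' = st := site_swapK z st.
have cs' : color_swap c st' = st by rewrite e color_swapK.
have [s1 s2] : st'.1 z = st.1 (z + 1) /\ st'.1 (z + 1) = st.1 z.
  by rewrite /= !swapAtE transp_l transp_r.
have [c1 c2] : st'.2 c = st.2 (c + 1) /\ st'.2 (c + 1) = st.2 c.
  by rewrite e /= !swapAtE transp_l transp_r.
rewrite /Esite /Ecolor -/st' -e ss' cs' s1 s2 c1 c2.
case: hz => -[e1 e2].
- have [x1 x2] : st.2 c = z /\ st.2 (c + 1) = z + 1 by rewrite -e2 -e1 !h1.
  rewrite e1 e2 x1 x2 (@swap_rate_lt _ z) ?(@swap_rate_lt _ c)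
    ?(@swap_rate_gt _ (z + 1)) ?(@swap_rate_gt _ (c + 1)); try lia.
  ring.
- have [x1 x2] : st.2 c = z + 1 /\ st.2 (c + 1) = z by rewrite -e1 -e2 !h1.
  rewrite e1 e2 x1 x2 (@swap_rate_lt _ z) ?(@swap_rate_lt _ c)
    ?(@swap_rate_gt _ (z + 1)) ?(@swap_rate_gt _ (c + 1)); try lia.
  ring.
Qed.

Lemma Esite_EcolorC z p c r f st : inverse_pair st ->
  Esite z p (Ecolor c r f) st = Ecolor c r (Esite z p f) st.
Proof.
move=> hst; have [h1 h2] := hst.
have [hz|nhz] := EM (maps_pair st.1 z c); first exact: Esite_Ecolor_coincide.
have nhc : ~ maps_pair st.2 c z by move/(maps_pair_inv h2).
by rewrite /Esite /Ecolor site_color_swapC /= !swap_rate_transp //; ring.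
Qed.

Definition Eseq (ops : seq (int * R)) (f : cpair -> R) : cpair -> R :=
  foldr (fun o g => Esite o.1 o.2 g) f ops.

Lemma Eseq_ext ops f g :
  (forall st, inverse_pair st -> f st = g st) ->
  forall st, inverse_pair st -> Eseq ops f st = Eseq ops g st.
Proof.
move=> fg; elim: ops => [|o ops IH] st hst //=; first exact: fg.
by rewrite /Esite !IH //; apply: inverse_pair_site_swap.
Qed.

Lemma Ecolor_Eseq c r ops f st : inverse_pair st ->
  Ecolor c r (Eseq ops f) st = Eseq ops (Ecolor c r f) st.
Proof.
elim: ops st => [|o ops IH] st hst //=.
rewrite -Esite_EcolorC // /Esite !IH //; first exact: inverse_pair_site_swap.
Qed.

(* At the identity a site swap is the color swap of the same pair, and color
   swaps can be pushed to the end of the sequence. *)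
Lemma Eseq_rev ops f :
  Eseq ops f id_pair = Eseq (rev ops) (f \o dual) id_pair.
Proof.
elim: ops f => [|o ops IH] f //=.
have -> : Esite o.1 o.2 (Eseq ops f) id_pair = Ecolor o.1 o.2 (Eseq ops f) id_pair.
  by rewrite /Esite /Ecolor site_swap_id_pair.
rewrite Ecolor_Eseq // IH rev_cons -cats1 /Eseq foldr_cat.
by congr (foldr _ _ _ _); apply: funext => st; rewrite /= Ecolor_dual.
Qed.

End ExpectationOperators.

(** * Events of finitely many independent coins *)

Section CoinEvents.
Variables (R : realType) (d : measure_display) (Omega : measurableType d).
Variables (P : probability Omega R) (E : coin_index -> set Omega).
Variables (pf : nat -> int -> R) (q : R).
Hypothesis hE : coin_family P E pf q.

Definition coins (w : Omega) (i : coin_index) : bool := w \in E i.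

Definition all_coins (J : seq coin_index) : set Omega := \big[setI/setT]_(i <- J) E i.

Local Notation pr S := (fine (P S)).

Lemma measurable_coin i : measurable (E i). Proof. by case: hE. Qed.

Lemma measurable_all_coins J : measurable (all_coins J).
Proof.
elim: J => [|i J IH]; rewrite /all_coins ?big_nil ?big_cons //.
exact: measurableI (measurable_coin i) IH.
Qed.

Let prE S : measurable S -> P S = (pr S)%:E.
Proof. by move=> mS; rewrite fineK // fin_num_measure. Qed.

Let prU S1 S2 : measurable S1 -> measurable S2 -> S1 `&` S2 = set0 ->
  pr (S1 `|` S2) = pr S1 + pr S2.
Proof. by move=> m1 m2 S12; rewrite measureU // fineD ?fin_num_measure. Qed.

Let pr_all_coins_cons i J : uniq (i :: J) ->
  pr (all_coins (i :: J)) = pr (E i) * pr (all_coins J).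
Proof.
move=> u; have [_ ind _ _] := hE; have uJ : uniq J by case/andP: u.
rewrite /all_coins (ind _ u) big_cons -(ind _ uJ) fineM //.
  exact: fin_num_measure (measurable_coin i).
exact: fin_num_measure (measurable_all_coins J).
Qed.

Definition indep_of (K : seq coin_index) (S : set Omega) (v : R) :=
  measurable S /\ forall J, uniq J -> (forall j, j \in J -> j \notin K) ->
    pr (all_coins J `&` S) = pr (all_coins J) * v.

Lemma indep_of_set0 K : indep_of K set0 0.
Proof. by split=> // J _ _; rewrite setI0 measure0 mulr0. Qed.

Lemma indep_of_setT K : indep_of K setT 1.
Proof. by split=> // J _ _; rewrite setIT mulr1. Qed.

Lemma indep_of_setU K S1 S2 v1 v2 : S1 `&` S2 = set0 ->
  indep_of K S1 v1 -> indep_of K S2 v2 -> indep_of K (S1 `|` S2) (v1 + v2).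
Proof.
move=> S12 [m1 h1] [m2 h2]; split=> [|J u hJ]; first exact: measurableU.
have mJ := measurable_all_coins J.
rewrite setIUr prU ?h1 ?h2 ?mulrDr //; try exact: measurableI.
by rewrite setIACA S12 setI0.
Qed.

Lemma indep_of_coin i K S v : i \notin K -> indep_of K S v ->
  indep_of (i :: K) (E i `&` S) (pr (E i) * v).
Proof.
move=> iK [mS h]; split=> [|J u hJ]; first exact: measurableI (measurable_coin i) mS.
have iJ : i \notin J by apply/negP => /hJ; rewrite inE eqxx.
have hJK j : j \in i :: J -> j \notin K.
  by rewrite inE => /orP [/eqP -> //|/hJ]; rewrite inE negb_or => /andP [].
have -> : all_coins J `&` (E i `&` S) = all_coins (i :: J) `&` S.
  by rewrite /all_coins big_cons setIA (setIC (\big[setI/setT]_(j <- J) E j)).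
have uiJ : uniq (i :: J) by rewrite /= iJ u.
by rewrite h // (pr_all_coins_cons uiJ) -mulrA mulrCA.
Qed.

Lemma indep_of_not_coin i K S v : i \notin K -> indep_of K S v ->
  indep_of (i :: K) (~` E i `&` S) ((1 - pr (E i)) * v).
Proof.
move=> iK G; have [mS h] := G; have [mES hE'] := indep_of_coin iK G.
have mC : measurable (~` E i `&` S) by exact: measurableI (measurableC (measurable_coin i)) mS.
split=> // J u hJ.
have hJK j : j \in J -> j \notin K.
  by move=> /hJ; rewrite inE negb_or => /andP [].
have mJ := measurable_all_coins J.
have split_S : all_coins J `&` S =
    (all_coins J `&` (E i `&` S)) `|` (all_coins J `&` (~` E i `&` S)).
  by rewrite -setIUr -setIUl setUCr setTI.
have := h J u hJK; rewrite split_S prU ?hE' //; last first.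
- by apply/seteqP; split => w //= [[_ [a _]] [_ [b _]]].
- exact: measurableI.
- exact: measurableI.
by move=> e; apply: (addrI (pr (all_coins J) * (pr (E i) * v))); rewrite e; ring.
Qed.

Lemma indep_of_branch i K S1 S0 v1 v0 : i \notin K ->
  indep_of K S1 v1 -> indep_of K S0 v0 ->
  indep_of (i :: K) [set w | if coins w i then S1 w else S0 w]
    (pr (E i) * v1 + (1 - pr (E i)) * v0).
Proof.
move=> iK G1 G0.
have -> : [set w | if coins w i then S1 w else S0 w] = (E i `&` S1) `|` (~` E i `&` S0).
  apply/seteqP; split=> w /=; rewrite /coins.
    by case: ifP => [/set_mem|/negbT/negP wi]; [left | right; split=> // /mem_set].
  by case=> -[wi ?]; [rewrite mem_set | case: ifP => // /set_mem].
apply: indep_of_setU; [|exact: indep_of_coin|exact: indep_of_not_coin].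
by apply/seteqP; split=> w // [[? _] [? _]].
Qed.

Definition run_sites (ops : seq (nat * int)) (c : coin_index -> bool) (st : cpair) : cpair :=
  foldl (fun st o => rand_site_swap o.2 (c (o.1, o.2, false)) (c (o.1, o.2, true)) st) st ops.

Definition coin_keys (ops : seq (nat * int)) : seq coin_index :=
  flatten [seq [:: (o.1, o.2, false); (o.1, o.2, true)] | o <- ops].

Definition site_rates (ops : seq (nat * int)) : seq (int * R) :=
  [seq (o.2, pf o.1 o.2) | o <- ops].

Definition indicator (f : cpair -> bool) : cpair -> R := fun st => if f st then 1 else 0.

Lemma indep_of_run ops (f : cpair -> bool) st : uniq (coin_keys ops) ->
  indep_of (coin_keys ops) [set w | f (run_sites ops (coins w) st)]
    (Eseq q (site_rates ops) (indicator f) st).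
Proof.
elim: ops st => [|[j z] ops IH] st u.
  have -> : [set w | f (run_sites [::] (coins w) st)] = if f st then setT else set0.
    by apply/seteqP; split => w /=; case: (f st).
  by rewrite /= /indicator; case: (f st); [exact: indep_of_setT | exact: indep_of_set0].
move: u; rewrite /coin_keys /= -/(coin_keys ops) => /andP [nx /andP [nq uK]].
have hx : pr (E (j, z, false)) = pf j z by have [_ _ -> _] := hE.
have hq : pr (E (j, z, true)) = q by have [_ _ _ ->] := hE.
have G a b := IH (rand_site_swap z a b st) uK.
have := indep_of_branch nx
  (indep_of_branch nq (G true true) (G true false))
  (indep_of_branch nq (G false true) (G false false)).
rewrite hx hq /= Esite_coins; congr indep_of.
by apply/seteqP; split=> w /=; case: (coins w _); case: (coins w _).
Qed.

Lemma prob_run ops (f : cpair -> bool) st : uniq (coin_keys ops) ->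
  measurable [set w | f (run_sites ops (coins w) st)] /\
  P [set w | f (run_sites ops (coins w) st)] = (Eseq q (site_rates ops) (indicator f) st)%:E.
Proof.
move=> u; have [m h] := indep_of_run f st u; split=> //.
have nil_disj : forall j, j \in [::] -> j \notin coin_keys ops by [].
have := h [::] erefl nil_disj.
by rewrite /all_coins big_nil !setTI probability_setT mul1r => <-; apply: prE.
Qed.

End CoinEvents.

(** * Locality of the dynamics *)

Definition pair_left (T : nat) (y : int) : int :=
  if (2 %| y - T%:Z)%Z then y else y - 1.

Lemma pair_left_parity T y : (2 %| pair_left T y - T%:Z)%Z.
Proof. by rewrite /pair_left; case: ifP => // /negbT; lia. Qed.

Lemma pair_left_cases T y : pair_left T y = y \/ pair_left T y = y - 1.
Proof. by rewrite /pair_left; case: ifP; [left | right]. Qed.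

Lemma pair_leftE T z y : (2 %| z - T%:Z)%Z -> y = z \/ y = z + 1 -> pair_left T y = z.
Proof. by rewrite /pair_left => hz [] ->; case: ifP => //; lia. Qed.

Lemma Wstep_out z a b (eta : config) y : y != z -> y != z + 1 ->
  Wstep z a b eta y = eta y.
Proof.
move=> yz yz1; rewrite /Wstep; case: ifP => // _.
by rewrite swapAtE /transp (negbTE yz) (negbTE yz1).
Qed.

Lemma Wstep_congr z a b (eta eta' : config) y :
  eta z = eta' z -> eta (z + 1) = eta' (z + 1) -> eta y = eta' y ->
  Wstep z a b eta y = Wstep z a b eta' y.
Proof.
move=> e0 e1 ey; rewrite /Wstep e0 e1; case: ifP => // _.
by rewrite !swapAtE /transp; repeat case: eqP.
Qed.

Lemma layerE T c (eta : config) y :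
  layer T c eta y = Wstep (pair_left T y) (c (pair_left T y) false)
                          (c (pair_left T y) true) eta y.
Proof.
rewrite /layer -/(pair_left T y) /Wstep; case: ifP => // _.
by rewrite swapAtE; case: (pair_left_cases T y) => ->; rewrite /transp;
  repeat case: eqP => //= *; congr eta; lia.
Qed.

Lemma layer_Wstep_out T c z (eta : config) y :
  (2 %| z - T%:Z)%Z -> pair_left T y != z ->
  layer T c (Wstep z (c z false) (c z true) eta) y = layer T c eta y.
Proof.
move=> hz hy; rewrite !layerE; have hp := pair_left_parity T y.
apply: Wstep_congr; apply: Wstep_out; apply/eqP => e; move/eqP: hy;
  case: (pair_left_cases T y) hp; lia.
Qed.

Definition partial_layer (zs : seq int) (c : int -> bool -> bool) (eta : config) : config :=
  foldl (fun eta z => Wstep z (c z false) (c z true) eta) eta zs.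

Lemma partial_layerE T zs c : uniq zs -> all (fun z => (2 %| z - T%:Z)%Z) zs ->
  forall eta y, partial_layer zs c eta y =
    if pair_left T y \in zs then layer T c eta y else eta y.
Proof.
elim: zs => [|z zs IH] //= /andP [zn u] /andP [pz pzs] eta y.
rewrite IH // inE.
have [e|ne] := eqVneq (pair_left T y) z.
  by rewrite e (negbTE zn) /= layerE e.
case: ifP => _; first exact: layer_Wstep_out.
apply: Wstep_out; apply/eqP => e; move/eqP: ne; apply; apply: pair_leftE => //; lia.
Qed.

Definition agree_on (lo hi : int) (eta eta' : config) :=
  forall y, lo <= y <= hi -> eta y = eta' y.

Lemma agree_on_sub lo hi lo' hi' eta eta' : lo <= lo' -> hi' <= hi ->
  agree_on lo hi eta eta' -> agree_on lo' hi' eta eta'.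
Proof. by move=> h1 h2 h y hy; apply: h; lia. Qed.

Lemma Wstep_agree z a b eta eta' lo hi : agree_on (lo - 1) (hi + 1) eta eta' ->
  agree_on lo hi (Wstep z a b eta) (Wstep z a b eta').
Proof.
move=> h y hy.
have [/orP hz|] := boolP ((y == z) || (y == z + 1)).
  by apply: Wstep_congr; apply: h; case: hz => /eqP; lia.
rewrite negb_or => /andP [yz yz1]; rewrite !Wstep_out //; apply: h; lia.
Qed.

Lemma layer_agree T c eta eta' lo hi : agree_on (lo - 1) (hi + 1) eta eta' ->
  agree_on lo hi (layer T c eta) (layer T c eta').
Proof.
move=> h y hy; rewrite !layerE; apply: Wstep_congr; apply: h;
  case: (pair_left_cases T y); lia.
Qed.

Definition local_within (M : int) (A : Type) (F G : A -> config -> config) :=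
  forall a eta eta' lo hi, - M + 1 <= lo -> hi <= M ->
    agree_on (lo - 1) (hi + 1) eta eta' -> agree_on lo hi (F a eta) (G a eta').

Lemma agree_on_foldl (M : int) (A : Type) (F G : A -> config -> config) :
  local_within M F G ->
  forall l eta eta' lo hi, - M <= lo - (size l)%:Z -> hi + (size l)%:Z <= M ->
  agree_on (lo - (size l)%:Z) (hi + (size l)%:Z) eta eta' ->
  agree_on lo hi (foldl (fun e a => F a e) eta l) (foldl (fun e a => G a e) eta' l).
Proof.
move=> hl; elim=> [|a l IH] eta eta' lo hi /=.
  by move=> _ _; apply: agree_on_sub; lia.
move=> h1 h2 h; apply: IH; try lia.
apply: hl; try lia.
by apply: agree_on_sub h; lia.
Qed.

Definition window_sites (M T : nat) : seq int :=
  [seq z <- [seq i%:Z - M%:Z | i <- iota 0 (M + M).+1] | (2 %| z - T%:Z)%Z].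

Lemma mem_window_sites M T z :
  (z \in window_sites M T) = (- (M%:Z) <= z <= M%:Z) && (2 %| z - T%:Z)%Z.
Proof.
rewrite /window_sites mem_filter andbC; congr andb; apply/mapP/idP.
  by move=> [i]; rewrite mem_iota => hi ->; lia.
by move=> h; exists (absz (z + M%:Z)); [rewrite mem_iota|]; lia.
Qed.

Lemma window_sites_uniq M T : uniq (window_sites M T).
Proof.
apply: filter_uniq; rewrite map_inj_uniq ?iota_uniq // => i j h.
by have [] : i%:Z = j%:Z by lia.
Qed.

Lemma local_within_layer (M : nat) (A : Type) (zsf : A -> seq int) (Tf : A -> nat)
    (cf : A -> int -> bool -> bool) :
  (forall a, zsf a =i window_sites M (Tf a)) -> (forall a, uniq (zsf a)) ->
  local_within M%:Z (fun a => layer (Tf a) (cf a)) (fun a => partial_layer (zsf a) (cf a)).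
Proof.
move=> hzs hu a eta eta' lo hi h1 h2 h y hy.
have par : all (fun z => (2 %| z - (Tf a)%:Z)%Z) (zsf a).
  by apply/allP => z; rewrite hzs mem_window_sites => /andP [].
rewrite (partial_layerE (T := Tf a)) // hzs mem_window_sites pair_left_parity andbT.
have -> /= : - M%:Z <= pair_left (Tf a) y <= M%:Z by case: (pair_left_cases (Tf a) y); lia.
exact: layer_agree h y hy.
Qed.

Lemma foldl_map (A B C : Type) (f : A -> B -> A) (g : C -> B) a l :
  foldl f a (map g l) = foldl (fun a c => f a (g c)) a l.
Proof. by elim: l a => //= c l IH a; rewrite IH. Qed.

Lemma iota_succ n : iota 1 n = [seq i.+1 | i <- iota 0 n].
Proof. by rewrite -(iotaDl 1 0). Qed.

Lemma rev_map_iota (A : Type) (f : nat -> A) n :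
  rev [seq f i | i <- iota 0 n] = [seq f (n - i.+1)%N | i <- iota 0 n].
Proof.
elim: n => // n IH.
rewrite [in LHS](_ : iota 0 n.+1 = iota 0 n ++ [:: n]); last by rewrite -addn1 iotaD.
by rewrite map_cat rev_cat IH /= iota_succ -map_comp subn1.
Qed.

Definition run_config (ops : seq (nat * int)) (c : coin_index -> bool) (eta : config) : config :=
  foldl (fun eta o => Wstep o.2 (c (o.1, o.2, false)) (c (o.1, o.2, true)) eta) eta ops.

Lemma run_sites_fst ops c st : (run_sites ops c st).1 = run_config ops c st.1.
Proof.
elim: ops st => [|o ops IH] st //=.
by rewrite IH /rand_site_swap /Wstep; case: ifP.
Qed.

Lemma run_config_cat l1 l2 c eta :
  run_config (l1 ++ l2) c eta = run_config l2 c (run_config l1 c eta).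
Proof. exact: foldl_cat. Qed.

Lemma run_config_layers (A : Type) (j : A -> nat) (zs : A -> seq int) l c eta :
  run_config (flatten [seq [seq (j a, z) | z <- zs a] | a <- l]) c eta =
  foldl (fun e a => partial_layer (zs a) (fun z k => c (j a, z, k)) e) eta l.
Proof.
elim: l eta => //= a l IH eta.
by rewrite run_config_cat IH /run_config foldl_map.
Qed.

Lemma mem_coin_keys ops (i : coin_index) : (i \in coin_keys ops) = (i.1 \in ops).
Proof.
case: i => [[j z] b]; elim: ops => // -[j' z'] ops IH.
rewrite /coin_keys /= -/(coin_keys ops) !inE IH orbA; congr orb.
by clear IH; rewrite !xpair_eqE; case: b; rewrite ?andbT ?andbF ?orbF.
Qed.

Lemma uniq_coin_keys ops : uniq ops -> uniq (coin_keys ops).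
Proof.
elim: ops => // -[j z] ops IH /= /andP [no u].
rewrite /coin_keys /= -/(coin_keys ops) !inE !mem_coin_keys /= (negbTE no) IH //.
by rewrite xpair_eqE eqxx.
Qed.

Lemma uniq_blocks (A : eqType) (h : A -> nat) (g : A -> seq int) l :
  uniq l -> {in l &, injective h} -> (forall t, uniq (g t)) ->
  uniq (flatten [seq [seq (h t, z) | z <- g t] | t <- l]).
Proof.
elim: l => // t l IH /= /andP [tl u] inj ug.
rewrite cat_uniq IH ?andbT //; last first.
  by move=> a b al bl; apply: inj; rewrite inE ?al ?bl orbT.
rewrite map_inj_uniq ?ug //=; last by move=> a b [].
apply/hasP => -[p /flattenP [bl /mapP [t' t'l ->] /mapP [z' _ ->]] /mapP [z _ [e _]]].
have et : t' = t by apply: inj; rewrite ?inE ?t'l ?eqxx ?orbT.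
by move: tl; rewrite -et t'l.
Qed.

Lemma mem_blocks (A : eqType) (h : A -> nat) (g : A -> seq int) l p :
  p \in flatten [seq [seq (h t, z) | z <- g t] | t <- l] -> exists2 t, t \in l & p.1 = h t.
Proof. by move=> /flattenP [bl /mapP [t tl ->] /mapP [z _ ->]]; exists t. Qed.

Section TruncatedProcesses.
Variables (tau : nat) (s : seq int).

(* The steps of processes 1 and 2 with every layer truncated to the sites of
   [-M, M]; the step (j, z) uses the same coins as in process1/process2. *)
Definition swap_steps1 := [seq (j, nth 0 s j) | j <- iota 0 (size s)].
Definition layer_steps1 (M : nat) :=
  flatten [seq [seq ((size s + T.-1)%N, z) | z <- window_sites M T] | T <- iota 1 tau].
Definition steps1 (M : nat) := swap_steps1 ++ layer_steps1 M.

Definition layer_steps2 (M : nat) :=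
  flatten [seq [seq (j, z) | z <- rev (window_sites M (tau - j))] | j <- iota 0 tau].
Definition swap_steps2 :=
  [seq ((tau + i)%N, nth 0 s (size s - i.+1)) | i <- iota 0 (size s)].
Definition steps2 (M : nat) := layer_steps2 M ++ swap_steps2.

Lemma uniq_steps1 M : uniq (steps1 M).
Proof.
rewrite cat_uniq; apply/and3P; split.
- by rewrite map_inj_uniq ?iota_uniq // => a b [].
- apply/hasP => -[p /mem_blocks [T _ e1] /mapP [j]].
  by rewrite mem_iota => /andP [_ hj] e2; move: e1; rewrite e2 /=; lia.
- apply: uniq_blocks; [exact: iota_uniq| |exact: window_sites_uniq].
  by move=> a b; rewrite !mem_iota; lia.
Qed.

Lemma uniq_steps2 M : uniq (steps2 M).
Proof.
rewrite cat_uniq; apply/and3P; split.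
- apply: (@uniq_blocks _ id) => //; first exact: iota_uniq.
  by move=> t; rewrite rev_uniq window_sites_uniq.
- apply/hasP => -[p /mapP [i _ e2] /(@mem_blocks _ id) [t]].
  by rewrite mem_iota e2 /=; lia.
- by rewrite map_inj_uniq ?iota_uniq // => a b [] /eqP; rewrite eqn_add2l => /eqP.
Qed.

Lemma rev_site_rates (R : realType) (x : int -> nat -> R) M :
  rev (site_rates (xprob1 tau s x) (steps1 M)) = site_rates (xprob2 tau s x) (steps2 M).
Proof.
rewrite /site_rates !map_cat rev_cat; congr cat.
- rewrite !map_flatten rev_flatten; congr flatten.
  rewrite -!map_comp iota_succ -map_comp rev_map_iota.
  apply/eq_in_map => j; rewrite mem_iota add0n => /andP [_ hj] /=.
  have -> : (tau - j.+1).+1 = (tau - j)%N by lia.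
  rewrite -!map_rev -!map_comp; apply/eq_in_map => z _ /=.
  rewrite /xprob1 /xprob2 hj.
  have h1 : ~~ (size s + (tau - j.+1) < size s)%N by lia.
  have h2 : (size s + (tau - j.+1) < size s + tau)%N by lia.
  have h3 : (size s + (tau - j.+1) - size s).+1 = (tau - j)%N by lia.
  by rewrite (negbTE h1) h2 h3.
- rewrite -!map_comp rev_map_iota; apply/eq_in_map => i.
  rewrite mem_iota => /andP [_ hi] /=; rewrite /xprob1 /xprob2.
  have h1 : (size s - i.+1 < size s)%N by lia.
  have h2 : ~~ (tau + i < tau)%N by lia.
  have h3 : (tau + i < tau + size s)%N by lia.
  by rewrite h1 eqxx (negbTE h2) h3 addKn eqxx.
Qed.

Variables (d : measure_display) (Omega : measurableType d) (E : coin_index -> set Omega).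
Variables (M : nat) (Q : int).
Hypotheses (Q_ge0 : 0 <= Q) (QM : Q + tau%:Z + (size s)%:Z <= M%:Z).

(* Each step only looks at nearest neighbours, so on [-Q, Q] the processes
   cannot tell the truncation at distance tau + size s. *)
Lemma process1_window w :
  agree_on (- Q) Q (process1 E tau s w) (run_config (steps1 M) (coins E w) id_config).
Proof.
rewrite run_config_cat run_config_layers /run_config foldl_map.
apply: (@agree_on_foldl M%:Z nat (fun T => layer T (coin E w (size s + T.-1)))
  (fun T => partial_layer (window_sites M T) (coin E w (size s + T.-1)))).
- by apply: (local_within_layer (Tf := id)) => // T; apply: window_sites_uniq.
- by rewrite !size_iota; lia.
- by rewrite !size_iota; lia.
- by [].
Qed.

Lemma process2_window w :
  agree_on (- Q) Q (process2 E tau s w) (run_config (steps2 M) (coins E w) id_config).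
Proof.
rewrite run_config_cat run_config_layers /run_config foldl_map.
pose zi i := nth 0 s (size s - i.+1).
apply: (@agree_on_foldl M%:Z nat
  (fun i => Wstep (zi i) (coin E w (tau + i) (zi i) false) (coin E w (tau + i) (zi i) true))
  (fun i => Wstep (zi i) (coin E w (tau + i) (zi i) false) (coin E w (tau + i) (zi i) true))).
- by move=> i e e' lo hi _ _; apply: Wstep_agree.
- by rewrite !size_iota; lia.
- by rewrite !size_iota; lia.
apply: (@agree_on_foldl M%:Z nat (fun j => layer (tau - j) (coin E w j))
  (fun j => partial_layer (rev (window_sites M (tau - j))) (coin E w j))).
- apply: (local_within_layer (Tf := fun j => (tau - j)%N)) => j.
    by move=> z; rewrite mem_rev.
  by rewrite rev_uniq window_sites_uniq.
- by rewrite !size_iota; lia.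
- by rewrite !size_iota; lia.
- by [].
Qed.

End TruncatedProcesses.

(** * Bijectivity and extension to measurable sets *)

Lemma Wstep_bij z a b (eta : config) : bijective eta -> bijective (Wstep z a b eta).
Proof.
move=> be; rewrite /Wstep; case: ifP => // _.
have -> : swapAt z eta = eta \o transp z by apply: funext => y; rewrite swapAtE.
exact: bij_comp be (inv_bij (transpK z)).
Qed.

Lemma layer_bij T c (eta : config) : bijective eta -> bijective (layer T c eta).
Proof.
move=> be; pose sf z := swapb (c z false) (c z true) (eta z) (eta (z + 1)).
pose pi y := if sf (pair_left T y) then transp (pair_left T y) y else y.
have -> : layer T c eta = eta \o pi.
  by apply: funext => y; rewrite layerE /Wstep /pi /sf /=; case: ifP; rewrite ?swapAtE.
apply: (bij_comp be); apply: inv_bij => y; rewrite /pi.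
case hs: (sf (pair_left T y)); last by rewrite hs.
have -> : pair_left T (transp (pair_left T y) y) = pair_left T y.
  apply: pair_leftE; first exact: pair_left_parity.
  by case: (pair_left_cases T y) => ->; rewrite /transp; repeat case: eqP => //= *; lia.
by rewrite hs transpK.
Qed.

Lemma foldl_bij (A : Type) (f : config -> A -> config) :
  (forall e a, bijective e -> bijective (f e a)) ->
  forall l e, bijective e -> bijective (foldl f e l).
Proof. by move=> hf; elim=> //= a l IH e be; apply/IH/hf. Qed.

Lemma id_config_bij : bijective id_config.
Proof. by exists id_config. Qed.

Lemma process1_bij d (Omega : measurableType d) (E : coin_index -> set Omega) tau s w :
  bijective (process1 E tau s w).
Proof.
apply: foldl_bij => [e T /layer_bij //|].
by apply: foldl_bij => [e j /Wstep_bij //|]; apply: id_config_bij.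
Qed.

Lemma process2_bij d (Omega : measurableType d) (E : coin_index -> set Omega) tau s w :
  bijective (process2 E tau s w).
Proof.
apply: foldl_bij => [e i /Wstep_bij //|].
by apply: foldl_bij => [e j /layer_bij //|]; apply: id_config_bij.
Qed.

Lemma inv_configE (eta : config) : bijective eta ->
  forall a z, (inv_config eta a == z) = (eta z == a).
Proof.
case=> g h1 h2 a z.
have -> : inv_config eta a = g a.
  by apply: xget_unique => [|y <-]; [exact: h2 | rewrite h1].
by apply/eqP/eqP => [<-|<-]; [exact: h2 | exact: h1].
Qed.

Lemma preimage_prob_eq_sigma (R : realType) d1 (T1 : measurableType d1)
    d2 (T2 : measurableType d2) (P1 : probability T1 R) (P2 : probability T2 R)
    (X : Type) (f1 : T1 -> X) (f2 : T2 -> X) (G : set (set X)) :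
  setI_closed G ->
  (forall A, G A -> [/\ measurable (f1 @^-1` A), measurable (f2 @^-1` A)
                      & P1 (f1 @^-1` A) = P2 (f2 @^-1` A)]) ->
  forall A, <<s G >> A -> P1 (f1 @^-1` A) = P2 (f2 @^-1` A).
Proof.
move=> GI GH A GA.
pose H := [set A | [/\ measurable (f1 @^-1` A), measurable (f2 @^-1` A)
                     & P1 (f1 @^-1` A) = P2 (f2 @^-1` A)]].
suff : H A by case.
apply: (@lambda_system_subset _ G GI setT H _ GH) => //.
have lty d (T : measurableType d) (P : probability T R) (B : set T) :
    measurable B -> (P B < +oo)%E.
  by move=> mB; apply: (le_lt_trans (probability_le1 P mB)); exact: ltry.
split.
- by [].
- by rewrite /H /= !preimage_setT !probability_setT; split.
- move=> B C CB [mB1 mB2 eB] [mC1 mC2 eC].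
  have preD (T : Type) (f : T -> X) : f @^-1` (B `\` C) = f @^-1` B `\` f @^-1` C.
    by [].
  rewrite /H /= !preD; split; try exact: measurableD.
  rewrite !measureD ?lty // !setIidr; try exact: preimage_subset.
  by congr (_ - _)%E.
- move=> F ndF HF.
  have m1 i : measurable (f1 @^-1` F i) by case: (HF i).
  have m2 i : measurable (f2 @^-1` F i) by case: (HF i).
  have mU1 : measurable (\bigcup_i f1 @^-1` F i) by exact: bigcupT_measurable.
  have mU2 : measurable (\bigcup_i f2 @^-1` F i) by exact: bigcupT_measurable.
  rewrite /H /= !preimage_bigcup; split => //.
  have nd (T : Type) (f : T -> X) :
      {homo (fun i => f @^-1` F i) : n m / (n <= m)%N >-> (n <= m)%O}.
    by move=> n m nm; apply/subsetPset => w; have /subsetPset := ndF n m nm; apply.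
  have c1 := @nondecreasing_cvg_mu _ _ R P1 _ m1 mU1 (nd _ f1).
  have c2 := @nondecreasing_cvg_mu _ _ R P2 _ m2 mU2 (nd _ f2).
  have e : P1 \o (fun i => f1 @^-1` F i) = P2 \o (fun i => f2 @^-1` F i).
    by apply: funext => i /=; case: (HF i).
  by rewrite -(cvg_lim _ c1) // -(cvg_lim _ c2) // e.
Qed.

Definition cylinder (l : seq (int * int)) : set config :=
  [set eta | all (fun p => eta p.1 == p.2) l].

Lemma cylinder_setI_closed : setI_closed [set A | exists l, A = cylinder l].
Proof.
move=> A B [l1 ->] [l2 ->]; exists (l1 ++ l2).
by apply/seteqP; split => e /=; rewrite /cylinder /= all_cat; [case=> -> -> | move/andP].
Qed.

Lemma cylinders_sub : cylinders `<=` [set A | exists l, A = cylinder l].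
Proof.
move=> B [z [a ->]]; exists [:: (z, a)].
by apply/seteqP; split => e /=; rewrite /cylinder /= andbT; [move=> -> | move/eqP].
Qed.

Definition cylinder_radius (l : seq (int * int)) : nat :=
  \max_(p <- l) (absz p.1 + absz p.2)%N.

Lemma cylinder_radiusP l p : p \in l ->
  - (cylinder_radius l)%:Z <= p.1 <= (cylinder_radius l)%:Z /\
  - (cylinder_radius l)%:Z <= p.2 <= (cylinder_radius l)%:Z.
Proof.
move=> pl; have : (absz p.1 + absz p.2 <= cylinder_radius l)%N.
  exact: (@leq_bigmax_seq _ l xpredT (fun p : int * int => absz p.1 + absz p.2)%N p pl).
lia.
Qed.

Section Cylinders.
Variables (R : realType) (q : R) (tau : nat) (x : int -> nat -> R) (s : seq int).
Variables (d1 : measure_display) (Omega1 : measurableType d1).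
Variables (P1 : probability Omega1 R) (E1 : coin_index -> set Omega1).
Variables (d2 : measure_display) (Omega2 : measurableType d2).
Variables (P2 : probability Omega2 R) (E2 : coin_index -> set Omega2).
Hypotheses (hc1 : coin_family P1 E1 (xprob1 tau s x) q)
           (hc2 : coin_family P2 E2 (xprob2 tau s x) q).

Lemma cylinder_law_eq l :
  [/\ measurable (process1 E1 tau s @^-1` cylinder l),
      measurable ((fun w => inv_config (process2 E2 tau s w)) @^-1` cylinder l)
    & P1 (process1 E1 tau s @^-1` cylinder l)
      = P2 ((fun w => inv_config (process2 E2 tau s w)) @^-1` cylinder l)].
Proof.
pose Q := cylinder_radius l; pose M := (Q + tau + size s)%N.
have QM : Q%:Z + tau%:Z + (size s)%:Z <= M%:Z by rewrite /M; lia.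
pose f1 (st : cpair) := all (fun p => st.1 p.1 == p.2) l.
pose f2 (st : cpair) := all (fun p => st.1 p.2 == p.1) l.
have Q0 : 0 <= Q%:Z by [].
have win1 w : all (fun p => process1 E1 tau s w p.1 == p.2) l =
    f1 (run_sites (steps1 tau s M) (coins E1 w) id_pair).
  rewrite /f1 run_sites_fst; apply: eq_in_all => p /cylinder_radiusP [hp _].
  by rewrite (process1_window E1 Q0 QM).
have win2 w : all (fun p => inv_config (process2 E2 tau s w) p.1 == p.2) l =
    f2 (run_sites (steps2 tau s M) (coins E2 w) id_pair).
  rewrite /f2 run_sites_fst; apply: eq_in_all => p /cylinder_radiusP [_ hp].
  by rewrite inv_configE ?(process2_window E2 Q0 QM) //; apply: process2_bij.
have -> : process1 E1 tau s @^-1` cylinder l =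
    [set w | f1 (run_sites (steps1 tau s M) (coins E1 w) id_pair)].
  by apply/seteqP; split=> w; rewrite /= /cylinder /= win1.
have -> : (fun w => inv_config (process2 E2 tau s w)) @^-1` cylinder l =
    [set w | f2 (run_sites (steps2 tau s M) (coins E2 w) id_pair)].
  by apply/seteqP; split=> w; rewrite /= /cylinder /= win2.
have [m1 ->] := prob_run hc1 f1 id_pair (uniq_coin_keys (uniq_steps1 tau s M)).
have [m2 ->] := prob_run hc2 f2 id_pair (uniq_coin_keys (uniq_steps2 tau s M)).
split=> //; congr EFin.
rewrite Eseq_rev rev_site_rates; apply: Eseq_ext => // -[e e'] [/= h1 h2].
rewrite /indicator /f1 /f2 /=.
suff -> : all (fun p => e' p.1 == p.2) l = all (fun p => e p.2 == p.1) l by [].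
by apply: eq_all => p; apply/eqP/eqP => [<-|<-].
Qed.

End Cylinders.

Unset Implicit Arguments.

Theorem theorem3p2 (R : realType) (q : R) (tau : nat) (x : int -> nat -> R)
  (s : seq int)
  (d1 : measure_display) (Omega1 : measurableType d1) (P1 : probability Omega1 R)
  (E1 : coin_index -> set Omega1)
  (d2 : measure_display) (Omega2 : measurableType d2) (P2 : probability Omega2 R)
  (E2 : coin_index -> set Omega2) :
  0 <= q <= 1 ->
  odd tau ->
  (forall (z : int) (T : nat), (1 <= T <= tau)%N -> (2 %| z - T%:Z)%Z ->
     0 <= x z T < 1) ->
  coin_family P1 E1 (xprob1 tau s x) q ->
  coin_family P2 E2 (xprob2 tau s x) q ->
  [/\ {ae P1, forall w, bijective (process1 E1 tau s w)},
      {ae P2, forall w, bijective (process2 E2 tau s w)}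
    & forall A : set config, config_measurable A ->
        P1 (process1 E1 tau s @^-1` A)
        = P2 ((fun w => inv_config (process2 E2 tau s w)) @^-1` A)].
Proof.
move=> _ _ _ hc1 hc2; split.
- by apply: aeW => w; apply: process1_bij.
- by apply: aeW => w; apply: process2_bij.
move=> A mA; apply: (preimage_prob_eq_sigma cylinder_setI_closed) => [B [l ->]|].
  exact: cylinder_law_eq hc1 hc2 l.
exact: sub_sigma_algebra2 cylinders_sub _ mA.
Qed.
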